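(* Let $G=\langle A,B\rangle$ be an abstract rank one group with unipotent subgroups $A,B$ and $V$ a $\mathbb{Z}G$-module with $[V,A,A,A]=0$, $[V,G,G,G]\neq0$, $[V,G]=V$ and $C_V(G)=0$, and suppose $A_0:=C_A([V,A])\cap C_A(V/C_V(A))\neq1$. Let $B_0=\{1\}\cup\{b(a):a\in A_0\setminus\{1\}\}$ and $G_0=\langle A_0,B_0\rangle$. Then (a) $[V,A]\cap[V,B]=C_V(G_0)$; (b) $[V,A]=C_V(A)\oplus C_V(G_0)$.
   Context: $G$ acts on $V$ on the right, $[v,g]=-v+vg$; $[X,Y]$ is the subgroup generated by all such commutators, $[X,Y,Z]=[[X,Y],Z]$. Abstract rank one group with unipotent subgroups $A,B$: $G=\langle A,B\rangle$, $A\neq B$ nilpotent, for each $a\in A\setminus\{1\}$ there is $b(a)\in B\setminus\{1\}$ with $B^a=A^{b(a)}$, and for each $b\in B\setminus\{1\}$ some $a(b)\in A\setminus\{1\}$ with $A^b=B^{a(b)}$. ($B_0$ is a subgroup of $B$ and $G_0$ is a rank one group with unipotent subgroups $A_0,B_0$.) *)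

(* Abstract (possibly infinite) groups are modelled with
   MathComp's [groupType] (boot/monoid.v); subsets/subgroups are Prop-valued
   predicates; the ZG-module V is a [zmodType] with a right action. *)
From HB Require Import structures.
From mathcomp Require Import all_boot ssralg.
Set Implicit Arguments. Unset Strict Implicit. Unset Printing Implicit Defensive.
Import GRing.Theory.

Section GroupDefs.
Variable gT : groupType.
Local Open Scope group_scope.

Definition set_eq (T : Type) (X Y : T -> Prop) := forall x, X x <-> Y x.

Definition is_subgroup (H : gT -> Prop) :=
  [/\ H 1, (forall x y, H x -> H y -> H (x * y)) & (forall x, H x -> H x^-1)].

Definition gen (S : gT -> Prop) : gT -> Prop :=
  fun x => forall H, is_subgroup H -> (forall s, S s -> H s) -> H x.

Definition commg_sub (H K : gT -> Prop) : gT -> Prop :=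
  gen (fun z => exists x y, [/\ H x, K y & z = [~ x, y]]).

Fixpoint lcs (H : gT -> Prop) (n : nat) : gT -> Prop :=
  match n with 0 => H | n'.+1 => commg_sub (lcs H n') H end.

Definition nilpotent_grp (H : gT -> Prop) :=
  exists n, forall x, lcs H n x -> x = 1.

Definition conj_set (H : gT -> Prop) (g : gT) : gT -> Prop :=
  fun x => exists2 h, H h & x = h ^ g.

(* Abstract rank one group G = <A,B> (G is the whole type gT) with unipotent
   subgroups A, B; [b] is a choice of the elements b(a) of the definition. *)
Definition rank_one (A B : gT -> Prop) (b : gT -> gT) :=
  [/\ is_subgroup A /\ is_subgroup B,
      set_eq (gen (fun x => A x \/ B x)) (fun _ => True),
      ~ set_eq A B /\ nilpotent_grp A /\ nilpotent_grp B,
      (forall a, A a -> a <> 1 ->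
         [/\ B (b a), b a <> 1 & set_eq (conj_set B a) (conj_set A (b a))]) &
      (forall y, B y -> y <> 1 ->
         exists a, [/\ A a, a <> 1 & set_eq (conj_set A y) (conj_set B a)])].
End GroupDefs.

Section ModuleDefs.
Variables (gT : groupType) (V : zmodType) (act : V -> gT -> V).
Local Open Scope ring_scope.

Definition is_module :=
  [/\ (forall v, act v 1%g = v),
      (forall v g h, act v (g * h)%g = act (act v g) h) &
      (forall v w g, act (v + w) g = act v g + act w g)].

Definition vcomm (v : V) (g : gT) : V := - v + act v g.

Definition is_addsub (W : V -> Prop) :=
  W 0 /\ (forall x y, W x -> W y -> W (x - y)).

Definition vgen (S : V -> Prop) : V -> Prop :=
  fun x => forall W, is_addsub W -> (forall s, S s -> W s) -> W x.

Definition VComm (X : V -> Prop) (Y : gT -> Prop) : V -> Prop :=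
  vgen (fun z => exists v g, [/\ X v, Y g & z = vcomm v g]).

Definition centV (Y : gT -> Prop) : V -> Prop :=
  fun v => forall g, Y g -> act v g = v.

Definition centG (Y : gT -> Prop) (X : V -> Prop) : gT -> Prop :=
  fun g => Y g /\ (forall x, X x -> act x g = x).

(* C_Y(V/W) : elements of Y acting trivially on V/W *)
Definition centG_quo (Y : gT -> Prop) (W : V -> Prop) : gT -> Prop :=
  fun g => Y g /\ (forall v, W (vcomm v g)).

Definition allV : V -> Prop := fun _ => True.
Definition is_zero (X : V -> Prop) := forall x, X x -> x = 0.
End ModuleDefs.
Arguments allV V : clear implicits.

(* Fix a ∈ A₀ with a ≠ 1 and put b = b(a); then B = A^g with g = b a⁻¹, and
   a' = a^g plays for B the role that a plays for A.  Since G = ⟨A,B⟩ we have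
   V = [V,A] + [V,B], while A^b ⊆ B^a gives [V,A] ⊆ C_V(A) + [V,B]; together with
   C_V(a) ∩ C_V(B) = 0 this yields C_V(a) = [V,A], and symmetrically
   C_V(a') = [V,B], whence C_V(A) ∩ [V,B] = 0.  The cubic condition, transported
   to B, puts [v,b] in C_V(a) ∩ C_V(B) = 0 for v ∈ [V,A] ∩ [V,B].  Hence
   [V,A] ∩ [V,B] = C_V(a) ∩ C_V(b) for every such a, i.e. it is C_V(G₀), and both
   parts follow. *)
From HB Require Import structures.
From mathcomp Require Import all_boot ssralg.
Import GRing.Theory.

Set Implicit Arguments.
Unset Strict Implicit.
Unset Printing Implicit Defensive.

Local Open Scope ring_scope.
Local Open Scope group_scope.

Section Conjugation.
Variable gT : groupType.

Definition conj_sub (H : gT -> Prop) (g : gT) (K : gT -> Prop) (h : gT) :=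
  forall x, H x -> exists2 y, K y & x ^ g = y ^ h.

Lemma mem_gen (S : gT -> Prop) x : S x -> gen S x.
Proof. by move=> Sx H _; apply. Qed.

Lemma gen_orC (H K : gT -> Prop) x :
  gen (fun g => H g \/ K g) x -> gen (fun g => K g \/ H g) x.
Proof. by move=> Gx L LL LS; apply: Gx => // s [] Ss; apply: LS; [right | left]. Qed.

End Conjugation.

Section Modules.
Variables (gT : groupType) (V : zmodType) (act : V -> gT -> V).
Hypothesis Hm : is_module act.

Local Notation comV H := (VComm act (allV V) H).

Definition sumV (W1 W2 : V -> Prop) (v : V) :=
  exists x y, [/\ W1 x, W2 y & v = x + y].

Lemma act1 v : act v 1 = v.
Proof. by case: Hm. Qed.

Lemma actM v g h : act v (g * h) = act (act v g) h.
Proof. by case: Hm. Qed.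

Lemma actD v w g : act (v + w) g = act v g + act w g.
Proof. by case: Hm. Qed.

Lemma act0 g : act 0 g = 0.
Proof. by apply: (addrI (act 0 g)); rewrite -actD !addr0. Qed.

Lemma actN v g : act (- v) g = - act v g.
Proof. by apply: (addrI (act v g)); rewrite -actD !subrr act0. Qed.

Lemma actB v w g : act (v - w) g = act v g - act w g.
Proof. by rewrite actD actN. Qed.

Lemma actK g : cancel (act^~ g) (act^~ g^-1).
Proof. by move=> v; rewrite -actM mulgV act1. Qed.

Lemma actKV g : cancel (act^~ g^-1) (act^~ g).
Proof. by move=> v; rewrite -actM mulVg act1. Qed.

Lemma act_conjg v g x : act (act v g) (x ^ g) = act (act v x) g.
Proof. by rewrite -!actM -conjgC. Qed.

Lemma act_fixJ v x y : act v x = v -> act v y = v -> act v (x ^ y) = v.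
Proof.
by move=> vx vy; rewrite conjgE !actM -{1}vy actK vx vy.
Qed.

Lemma addvcomm v g : v + vcomm act v g = act v g.
Proof. by rewrite /vcomm addNKr. Qed.

Lemma vcomm_conjg v g x : vcomm act (act v g) (x ^ g) = act (vcomm act v x) g.
Proof. by rewrite /vcomm act_conjg actD actN. Qed.

Lemma vcommM v g h :
  vcomm act v (g * h) = vcomm act v g + vcomm act (act v g) h.
Proof. by rewrite /vcomm actM addrA addrK. Qed.

Lemma vcommV v g : vcomm act v g^-1 = - vcomm act (act v g^-1) g.
Proof. by rewrite /vcomm actKV opprD opprK addrC. Qed.

Lemma stab_subgroup v : is_subgroup (fun g => act v g = v).
Proof.
split=> [|x y vx vy|x vx]; first exact: act1.
  by rewrite actM vx vy.
by rewrite -{1}vx actK.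
Qed.

Lemma fix_gen (S : gT -> Prop) v :
  (forall s, S s -> act v s = v) -> forall g, gen S g -> act v g = v.
Proof. by move=> vS g /(_ (fun g => act v g = v)); apply; [apply: stab_subgroup|]. Qed.

Lemma addsubD (W : V -> Prop) x y : is_addsub W -> W x -> W y -> W (x + y).
Proof.
by case=> W0 WB Wx Wy; have := WB _ _ Wx (WB _ _ W0 Wy); rewrite sub0r opprK.
Qed.

Lemma vgen_addsub (S : V -> Prop) : is_addsub (vgen S).
Proof.
split=> [W [] //|x y Sx Sy W WW WS].
by case: (WW) => _; apply; [apply: Sx | apply: Sy].
Qed.

Lemma mem_vgen (S : V -> Prop) s : S s -> vgen S s.
Proof. by move=> Ss W _; apply. Qed.

Lemma mem_VComm (X : V -> Prop) (H : gT -> Prop) v g :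
  X v -> H g -> VComm act X H (vcomm act v g).
Proof. by move=> Xv Hg; apply: mem_vgen; exists v, g. Qed.

Lemma sumV_addsub (W1 W2 : V -> Prop) :
  is_addsub W1 -> is_addsub W2 -> is_addsub (sumV W1 W2).
Proof.
move=> [W10 W1B] [W20 W2B]; split; first by exists 0, 0; rewrite addr0.
move=> _ _ [x [y [W1x W2y ->]]] [x' [y' [W1x' W2y' ->]]].
exists (x - x'), (y - y'); split; [exact: W1B | exact: W2B|].
by rewrite opprD addrACA.
Qed.

Lemma VComm_transport (X X' : V -> Prop) (H K : gT -> Prop) (g h : gT) :
  (forall v, X v -> exists2 w, X' w & act v g = act w h) ->
  conj_sub H g K h ->
  forall z, VComm act X H z -> exists2 w, VComm act X' K w & act z g = act w h.
Proof.
move=> XX' HK z.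
move/(_ (fun z => exists2 w, VComm act X' K w & act z g = act w h)); apply.
  split; first by exists 0; [apply: (proj1 (vgen_addsub _)) | rewrite !act0].
  move=> x y [wx Kwx ex] [wy Kwy ey]; exists (wx - wy).
    exact: (proj2 (vgen_addsub _)).
  by rewrite !actB ex ey.
move=> _ [v [x [Xv Hx ->]]]; have [w X'w evw] := XX' v Xv.
have [y Ky exy] := HK x Hx; exists (vcomm act w y); first exact: mem_VComm.
by rewrite -[LHS]vcomm_conjg evw exy vcomm_conjg.
Qed.

Lemma comV_transport (H K : gT -> Prop) (g h : gT) :
  conj_sub H g K h ->
  forall z, comV H z -> exists2 w, comV K w & act z g = act w h.
Proof.
apply: VComm_transport => v _; exists (act v (g * h^-1)) => //.
by rewrite actM actKV.
Qed.

Section ConjugateSubgroup.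
Variables (H K : gT -> Prop) (g : gT).
Hypothesis KHg : conj_sub K 1 H g.

Lemma comV_conj_sub z : comV K z -> exists2 w, comV H w & z = act w g.
Proof.
by move=> Kz; have [w Hw] := comV_transport KHg Kz; rewrite act1; exists w.
Qed.

Lemma centV_conj_sub c : centV act H c -> centV act K (act c g).
Proof.
move=> cH k Kk; have [h Hh] := KHg Kk; rewrite conjg1 => ->.
by rewrite act_conjg cH.
Qed.

Lemma cubic_conj_sub :
  is_zero (VComm act (VComm act (comV H) H) H) ->
  is_zero (VComm act (VComm act (comV K) K) K).
Proof.
move=> cubicH z Kz; rewrite -(act1 z).
have base v : comV K v -> exists2 w, comV H w & act v 1 = act w g.
  by move/comV_conj_sub=> [w Hw ->]; exists w; rewrite ?act1.
have [w Hw ->] := VComm_transport (VComm_transport base KHg) KHg Kz.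
by rewrite (cubicH w Hw) act0.
Qed.

Lemma centralise_comV_conj_sub x :
  (forall u, comV H u -> act u x = u) -> forall u, comV K u -> act u (x ^ g) = u.
Proof. by move=> xH _ /comV_conj_sub[w Hw ->]; rewrite act_conjg xH. Qed.

Lemma quadratic_conj_sub x :
  (forall v, centV act H (vcomm act v x)) ->
  forall v, centV act K (vcomm act v (x ^ g)).
Proof.
by move=> xH v; rewrite -(actKV g v) vcomm_conjg; apply: centV_conj_sub.
Qed.

End ConjugateSubgroup.

Lemma comm2_centV (H : gT -> Prop) :
  is_zero (VComm act (VComm act (comV H) H) H) ->
  forall u, VComm act (comV H) H u -> centV act H u.
Proof.
move=> cubicH u Hu h Hh; rewrite -addvcomm.
by rewrite (cubicH _ (mem_VComm Hu Hh)) addr0.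
Qed.

Section ConjugatePair.
Variables (H K : gT -> Prop) (x k : gT).
Hypotheses (Kk : K k) (HkKx : conj_sub H k K x).

Lemma comV_sub_centV_add :
  (forall v, centV act H (vcomm act v x)) ->
  forall u, comV H u -> sumV (centV act H) (comV K) u.
Proof.
move=> xH u Hu; have [w Kw euw] := comV_transport HkKx Hu.
exists (vcomm act w x), (w - vcomm act u k); split => //.
  by apply: (proj2 (vgen_addsub _)) => //; apply: mem_VComm.
by rewrite addrCA addrA addvcomm -euw -addvcomm addrK.
Qed.

Lemma centV_elt_eq0 :
  (forall v, centV act H v -> centV act K v -> v = 0) ->
  forall v, act v x = v -> centV act K v -> v = 0.
Proof.
move=> HK0 v vx vK; apply: HK0 => // h Hh.
have [y Ky ehy] := HkKx Hh.
rewrite -(conjgK k h) ehy; apply: act_fixJ; first exact: act_fixJ (vK y Ky) vx.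
by rewrite -{1}(vK k Kk) actK.
Qed.

End ConjugatePair.

Lemma centV_join_eq0 (H K : gT -> Prop) :
  set_eq (gen (fun g => H g \/ K g)) (fun _ => True) ->
  is_zero (centV act (fun _ => True)) ->
  forall v, centV act H v -> centV act K v -> v = 0.
Proof.
move=> HKG CG0 v vH vK; apply: CG0 => g _.
by move: (proj2 (HKG g) I); apply: fix_gen => s [/vH|/vK].
Qed.

Lemma comV_join_sum (H K : gT -> Prop) :
  set_eq (gen (fun g => H g \/ K g)) (fun _ => True) ->
  set_eq (comV (fun _ => True)) (allV V) ->
  forall v, sumV (comV H) (comV K) v.
Proof.
move=> HKG VG v; set P := sumV (comV H) (comV K).
have H0 : comV H 0 := proj1 (vgen_addsub _).
have K0 : comV K 0 := proj1 (vgen_addsub _).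
have [P0 PB] : is_addsub P by apply: sumV_addsub; apply: vgen_addsub.
have commP g : forall v, P (vcomm act v g).
  apply: (proj2 (HKG g) I (fun g => forall v, P (vcomm act v g))).
    split=> [u|g1 g2 Pg1 Pg2 u|g1 Pg1 u].
    - by rewrite /vcomm act1 addNr.
    - by rewrite vcommM; apply: addsubD.
    - by rewrite vcommV -sub0r; apply: PB.
  move=> s [Hs|Ks] u.
    by exists (vcomm act u s), 0; rewrite addr0; split => //; apply: mem_VComm.
  by exists 0, (vcomm act u s); rewrite add0r; split => //; apply: mem_VComm.
by apply: (proj2 (VG v) I P) => // _ [u [g [_ _ ->]]].
Qed.

Lemma sumV_absorb (W1 W2 C : V -> Prop) :
  is_addsub W2 -> (forall v, sumV W1 W2 v) ->
  (forall w, W1 w -> sumV C W2 w) -> forall v, sumV C W2 v.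
Proof.
move=> W2B W12 W1C v; have [w1 [w2 [/W1C [c [w [Cc W2w ->]]] W2w2 ->]]] := W12 v.
by exists c, (w + w2); rewrite addrA; split => //; apply: addsubD.
Qed.

Lemma fix_sumV (C W : V -> Prop) (x : gT) :
  (forall v, sumV C W v) -> (forall w, W w -> act w x = w) ->
  (forall c, act c x = c -> C c -> c = 0) ->
  forall v, act v x = v -> W v.
Proof.
move=> CW xW Cx0 v vx; have [c [w [Cc Ww ev]]] := CW v.
suff c0 : c = 0 by rewrite ev c0 add0r.
apply: Cx0 => //; have -> : c = v - w by rewrite ev addrK.
by rewrite actB vx xW.
Qed.

End Modules.

Section RankOne.
Variables (gT : groupType) (V : zmodType) (act : V -> gT -> V).
Variables (A B : gT -> Prop) (b : gT -> gT).
Hypotheses (HR : rank_one A B b) (Hm : is_module act).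
Hypotheses (cubicA : is_zero (VComm act (VComm act (VComm act (allV V) A) A) A))
  (VG : set_eq (VComm act (allV V) (fun _ => True)) (allV V))
  (CG0 : is_zero (centV act (fun _ => True))).

Local Notation X := (VComm act (allV V) A).
Local Notation Y := (VComm act (allV V) B).

Variable a : gT.
Hypotheses (Aa : A a) (a1 : a <> 1)
  (a_centX : forall u, X u -> act u a = u)
  (a_quadratic : forall v, centV act A (vcomm act v a)).

Local Notation bb := (b a).

Let HAB : set_eq (gen (fun g => A g \/ B g)) (fun _ => True).
Proof. by case: HR. Qed.

Let Bb : B bb.
Proof. by case: HR => _ _ _ /(_ a Aa a1) []. Qed.

Let conj_BaAb : conj_sub B a A bb.
Proof.
case: HR => _ _ _ /(_ a Aa a1) [_ _ Hc] _ y By.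
by apply: (proj1 (Hc (y ^ a))); exists y.
Qed.

Let conj_AbBa : conj_sub A bb B a.
Proof.
case: HR => _ _ _ /(_ a Aa a1) [_ _ Hc] _ x Ax.
by apply: (proj2 (Hc (x ^ bb))); exists x.
Qed.

Let centAB_eq0 : forall v, centV act A v -> centV act B v -> v = 0.
Proof. exact: centV_join_eq0. Qed.

Let centBA_eq0 : forall v, centV act B v -> centV act A v -> v = 0.
Proof. by move=> v vB vA; apply: centAB_eq0. Qed.

Local Notation g := (bb * a^-1).
Local Notation a' := (a ^ g).

Let conj_B1Ag : conj_sub B 1 A g.
Proof.
move=> y By; have [x Ax exy] := conj_BaAb By.
by exists x; rewrite // conjg1 conjgM -exy conjgK.
Qed.

Let Ba' : B a'.
Proof.
have [y By eay] := conj_AbBa Aa.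
by rewrite conjgM eay conjgK.
Qed.

Let a'1 : a' <> 1.
Proof. by move=> ea'; apply: a1; rewrite -(conjgK g a) ea' conj1g. Qed.

Let a'_centY : forall u, Y u -> act u a' = u.
Proof. exact: (centralise_comV_conj_sub Hm conj_B1Ag). Qed.

Let a'_quadratic : forall v, centV act B (vcomm act v a').
Proof. exact: (quadratic_conj_sub Hm conj_B1Ag). Qed.

Let conj_dual : exists2 k, A k & conj_sub B k A a'.
Proof.
case: HR => _ _ _ _ /(_ a' Ba' a'1) [k [Ak _ Hc]].
by exists k => // y By; apply: (proj2 (Hc (y ^ k))); exists y.
Qed.

Let cent_a_centB_eq0 v : act v a = v -> centV act B v -> v = 0.
Proof. exact: (centV_elt_eq0 Hm Bb conj_AbBa centAB_eq0). Qed.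

Let cent_b_centA_eq0 v : act v bb = v -> centV act A v -> v = 0.
Proof. exact: (centV_elt_eq0 Hm Aa conj_BaAb centBA_eq0). Qed.

Let cent_a'_centA_eq0 v : act v a' = v -> centV act A v -> v = 0.
Proof. by have [k Ak Hk] := conj_dual; apply: (centV_elt_eq0 Hm Ak Hk centBA_eq0). Qed.

Let sum_centA_Y v : sumV (centV act A) Y v.
Proof.
apply: sumV_absorb (comV_join_sum Hm HAB VG) _ v; first exact: vgen_addsub.
exact: (comV_sub_centV_add Hm Bb conj_AbBa a_quadratic).
Qed.

Let sum_centB_X v : sumV (centV act B) X v.
Proof.
have HBA : set_eq (gen (fun x => B x \/ A x)) (fun _ => True).
  by move=> x; split=> // _; apply: gen_orC; apply: (proj2 (HAB x)).
have [k Ak Hk] := conj_dual.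
apply: sumV_absorb (comV_join_sum Hm HBA VG) _ v; first exact: vgen_addsub.
exact: (comV_sub_centV_add Hm Ak Hk a'_quadratic).
Qed.

Lemma cent_sub_comV v : act v a = v -> X v.
Proof. exact: (fix_sumV Hm sum_centB_X a_centX cent_a_centB_eq0). Qed.

Lemma centA_comV_eq0 v : centV act A v -> Y v -> v = 0.
Proof. by move=> vA /a'_centY va'; apply: cent_a'_centA_eq0 va' vA. Qed.

Let XB : is_addsub X := vgen_addsub _.
Let YB : is_addsub Y := vgen_addsub _.

Let centB_comm2 u : VComm act Y B u -> centV act B u.
Proof. exact: (comm2_centV (cubic_conj_sub Hm conj_B1Ag cubicA)). Qed.

Lemma comV_cap_cent_b v : X v -> Y v -> act v bb = v.
Proof.
move=> Xv Yv; have [y Yy evy] := comV_transport Hm conj_AbBa Xv.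
have ya0 : vcomm act y a = 0.
  apply: centA_comV_eq0 (a_quadratic y) _.
  rewrite /vcomm addrC -evy -addvcomm addrAC.
  by apply: (addsubD YB); [apply: (proj2 YB) | apply: mem_VComm].
have ya : act y a = y by rewrite -addvcomm ya0 addr0.
have vby : act v bb = y by rewrite evy ya.
have u0 : vcomm act v bb = 0.
  apply: cent_a_centB_eq0; last exact: centB_comm2 _ (mem_VComm Yv Bb).
  by rewrite /vcomm (actD Hm) (actN Hm) a_centX // vby ya.
by rewrite -addvcomm u0 addr0.
Qed.

Lemma cent_ab_comV_cap v : act v a = v -> act v bb = v -> X v /\ Y v.
Proof.
move=> va vb; split; first exact: cent_sub_comV.
have [c [y [Ac Yy ev]]] := sum_centA_Y v.
have ya : act y a = y.
  have -> : y = v - c by rewrite ev (addrC c) addrK.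
  by rewrite (actB Hm) va Ac.
have yb : act y bb = y by apply: comV_cap_cent_b => //; apply: cent_sub_comV.
have c0 : c = 0.
  apply: cent_b_centA_eq0 Ac.
  have -> : c = v - y by rewrite ev addrK.
  by rewrite (actB Hm) vb yb.
by rewrite ev c0 add0r.
Qed.

Lemma centA_sub_comV v : centV act A v -> X v.
Proof. by move=> vA; apply: cent_sub_comV; apply: vA. Qed.

Lemma comV_sub_centA_add_cap v : X v -> sumV (centV act A) (fun w => X w /\ Y w) v.
Proof.
move=> Xv; have [c [y [Ac Yy ev]]] := comV_sub_centV_add Hm Bb conj_AbBa a_quadratic Xv.
exists c, y; split => //; split => //.
have -> : y = v - c by rewrite ev (addrC c) addrK.
by apply: (proj2 XB) => //; apply: centA_sub_comV.
Qed.

End RankOne.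

Theorem lemma3p12 (gT : groupType) (V : zmodType) (act : V -> gT -> V)
    (A B : gT -> Prop) (b : gT -> gT) :
  rank_one A B b ->
  is_module act ->
  is_zero (VComm act (VComm act (VComm act (allV V) A) A) A) ->
  ~ is_zero (VComm act (VComm act (VComm act (allV V) (fun _ => True)) (fun _ => True)) (fun _ => True)) ->
  set_eq (VComm act (allV V) (fun _ => True)) (allV V) ->
  is_zero (centV act (fun _ => True)) ->
  let A0 := fun g => centG act A (VComm act (allV V) A) g /\
                     centG_quo act A (centV act A) g in
  (exists2 a, A0 a & a <> 1%g) ->
  let B0 := fun y => y = 1%g \/ exists a, [/\ A0 a, a <> 1%g & y = b a] in
  let G0 := gen (fun g => A0 g \/ B0 g) in
  set_eq (fun v => VComm act (allV V) A v /\ VComm act (allV V) B v)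
         (centV act G0)
  /\
  (set_eq (VComm act (allV V) A)
          (fun v => exists y z, [/\ centV act A y, centV act G0 z & v = (y + z)%R])
   /\ is_zero (fun v => centV act A v /\ centV act G0 v)).
Proof.
move=> HR Hm cubicA _ VG CG0 A0 [a0 A0a0 a01] B0 G0.
have [[Aa0 a0X] [_ a0Q]] := A0a0.
have cap_cent v : VComm act (allV V) A v /\ VComm act (allV V) B v <-> centV act G0 v.
  split=> [[Xv Yv] g|vG0].
    apply: fix_gen => // s [[[As sX] _] | [-> | [a [[[Aa aX] [_ aQ]] a1 ->]]]].
    - exact: sX.
    - exact: act1.
    - exact: (comV_cap_cent_b HR Hm cubicA CG0 Aa a1 aX aQ).
  apply: (cent_ab_comV_cap HR Hm cubicA VG CG0 Aa0 a01 a0X a0Q); apply: vG0.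
    by apply: mem_gen; left.
  by apply: mem_gen; right; right; exists a0.
split=> //; split=> v.
  split=> [Xv | [c [z [Ac G0z ->]]]].
    have [c [y [Ac /cap_cent G0y ->]]] :=
      comV_sub_centA_add_cap HR Hm VG CG0 Aa0 a01 a0X a0Q Xv.
    by exists c, y.
  apply: (addsubD (vgen_addsub _)).
    exact: (centA_sub_comV HR Hm VG CG0 Aa0 a01 a0X a0Q).
  by case/cap_cent: G0z.
move=> [Av /cap_cent [_ Yv]].
exact: (centA_comV_eq0 HR Hm CG0 Aa0 a01 a0X Av).
Qed.
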